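(* Let $(Q,\mathcal Q)$, $(\Delta,\mathcal D)$ be measurable spaces, $f:Q\to Q$ and $g:Q\to\Delta$ measurable, and let $T$ be the generator with $T(x,\cdot)=\delta_{(f(x),g(f(x)))}$ (i.e. $T(x,A\times B)=1$ if $f(x)\in A$ and $g(f(x))\in B$, and $0$ otherwise). Then for $x_1,x_2\in Q$ the following are equivalent: (i) $G_T(\delta_{x_1})=G_T(\delta_{x_2})$; (ii) $T(x_1,C)=T(x_2,C)$ for all $C\in\sigma_Q(T)\otimes\mathcal D$.
   Context: A generator $[(Q,\mathcal Q),T,(\Delta,\mathcal D)]$ consists of measurable spaces $(Q,\mathcal Q)$ and $(\Delta,\mathcal D)$ and a Markov transition kernel $T$ from $(Q,\mathcal Q)$ to $(Q\times\Delta,\mathcal Q\otimes\mathcal D)$. For a probability measure $\mu$ on $(Q,\mathcal Q)$, $G_T(\mu)$ is the unique probability measure on $(\Delta^{\mathbb N},\mathcal D^{\mathbb N})$ whose finite-dimensional marginals are $P_n^{\mu,T}(B_1\times\cdots\times B_n):=\int_Q\int_{Q\times B_1}\cdots\int_{Q\times B_n}T(x_{n-1},d(x_n,y_n))\cdots T(x_0,d(x_1,y_1))\,\mu(dx_0)$; $\delta_x$ is the Dirac measure at $x$. $\sigma_Q(T)$ denotes the smallest $\sigma$-subalgebra $\mathcal A$ of $\mathcal Q$ such that for every $C\in\mathcal A\otimes\mathcal D$ the function $x\mapsto T(x,C)$ is $\mathcal A$-measurable. *)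

From HB Require Import structures.
From mathcomp Require Import all_boot all_order all_algebra.
From mathcomp Require Import all_classical all_reals all_analysis measurable_realfun.
Set Implicit Arguments. Unset Strict Implicit. Unset Printing Implicit Defensive.
Import Order.TTheory GRing.Theory Num.Theory.
Local Open Scope classical_set_scope.
Local Open Scope ring_scope.
Local Open Scope ereal_scope.

Section generators.
Context {d1 d2 : measure_display} {Q : measurableType d1} {D : measurableType d2}
  {R : realType}.

Definition sub_sigma (A : set (set Q)) : Prop :=
  sigma_algebra setT A /\ A `<=` measurable.

Definition prod_sigma (A : set (set Q)) : set (set (Q * D)) :=
  <<s [set C | exists A1 B, A A1 /\ measurable B /\ C = A1 `*` B] >>.

Definition kernel_meas_wrt (A : set (set Q)) (T : Q -> set (Q * D) -> \bar R) :=
  forall C, prod_sigma A C ->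
  forall B : set (\bar R), measurable B -> A ((fun x => T x C) @^-1` B).

Definition sigmaQ (T : Q -> set (Q * D) -> \bar R) : set (set Q) :=
  fun S => forall A, sub_sigma A -> kernel_meas_wrt A T -> A S.

(* the iterated integral
   \int_{Q x B_1} ... \int_{Q x B_n} 1 T(x_{n-1}, d(x_n,y_n)) ... T(x_0, d(x_1,y_1)) *)
Fixpoint iterT (T : R.-ker Q ~> (Q * D)%type) (Bs : seq (set D)) (x : Q)
  : \bar R :=
  match Bs with
  | [::] => 1
  | B :: Bs' => \int[T x]_(z in [set: Q] `*` B) iterT T Bs' z.1
  end.

Definition marginal (T : R.-ker Q ~> (Q * D)%type)
  (mu : {measure set Q -> \bar R}) (Bs : seq (set D)) : \bar R :=
  \int[mu]_x iterT T Bs x.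

(* measurable rectangle B_1 x ... x B_n x D x D x ... in D^N
   (coordinate i of the sequence is y_{i+1}) *)
Definition rect (Bs : seq (set D)) : set (nat -> D) :=
  [set w | forall i, (i < size Bs)%N -> nth set0 Bs i (w i)].

Definition meas_seq (Bs : seq (set D)) : Prop :=
  forall i, (i < size Bs)%N -> measurable (nth set0 Bs i).

Definition cylinders : set (set (nat -> D)) :=
  [set S | exists Bs, meas_seq Bs /\ S = rect Bs].

Definition seqSpace := g_sigma_algebraType cylinders.

Definition is_GT (T : R.-ker Q ~> (Q * D)%type) (mu : {measure set Q -> \bar R})
  (P : probability seqSpace R) : Prop :=
  forall Bs, meas_seq Bs -> P (rect Bs) = marginal T mu Bs.

End generators.

Lemma det_meas {d1 d2 : measure_display} {Q : measurableType d1}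
  {D : measurableType d2} (f : Q -> Q) (g : Q -> D)
  (mf : measurable_fun setT f) (mg : measurable_fun setT g) :
  measurable_fun setT (fun x => (f x, g (f x))).
Proof.
apply: measurable_fun_pair => //.
exact: measurableT_comp.
Qed.

Definition detT {d1 d2 : measure_display} {Q : measurableType d1}
  {D : measurableType d2} (R : realType) (f : Q -> Q) (g : Q -> D)
  (mf : measurable_fun setT f) (mg : measurable_fun setT g)
  : R.-pker Q ~> (Q * D)%type :=
  kdirac (det_meas mf mg).

From HB Require Import structures.
From mathcomp Require Import all_boot all_order all_algebra.
From mathcomp Require Import all_classical all_reals all_analysis measurable_realfun.
Import GRing.Theory.
Local Open Scope classical_set_scope.
Local Open Scope ring_scope.
Local Open Scope ereal_scope.

(* Under the deterministic generator the chain started at x runs along the orbit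
   of f, so G_T(delta_x) is the Dirac mass at the output sequence
   (g (f^(n+1) x))_n.  Hence (i) says that the output sequences of x1 and x2 are
   coordinatewise indistinguishable by the measurable sets of Delta.  By
   induction on k, every set {x | g (f^(k+1) x) \in B} belongs to sigma_Q(T):
   it is the level set {x | T(x, C) = 1} for C = Q x B, resp. C = S x Delta
   with S the corresponding set for k - 1.  This gives (ii) => (i).
   Conversely, the measurable sets that cannot separate points with
   indistinguishable outputs form a sigma-subalgebra for which T is measurable;
   it therefore contains sigma_Q(T), and no set of sigma_Q(T) (x) D separates
   (f x1, g (f x1)) from (f x2, g (f x2)). *)

Definition invariant {T : Type} (r : T -> T -> Prop) (S : set T) : Prop :=
  forall y y', r y y' -> (S y <-> S y').

Lemma sigma_algebra_invariant {T : Type} (r : T -> T -> Prop) :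
  sigma_algebra setT (invariant r).
Proof.
split.
- by move=> y y'.
- move=> S rS y y' ryy' /=; have := rS y y' ryy'; tauto.
- move=> F rF y y' ryy'; split=> -[n _ Fn]; exists n => //; exact/(rF n y y' ryy').
Qed.

Lemma indic_eq_iff {T : Type} {R : numDomainType} (A : set T) a b :
  (\1_A a : R) = \1_A b <-> (A a <-> A b).
Proof.
rewrite !indicE.
have [Aa|Aa] := pselect (A a); have [Ab|Ab] := pselect (A b);
  rewrite ?(mem_set Aa) ?(memNset Aa) ?(mem_set Ab) ?(memNset Ab) /=;
  split=> //; first [by move/eqP; rewrite ?oner_eq0 // eq_sym oner_eq0
                    | by move=> AaAb; exfalso; tauto].
Qed.

Lemma indic_eq1 {T : Type} {R : numDomainType} (A : set T) a :
  (\1_A a : R) = 1%R <-> A a.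
Proof.
rewrite indicE; have [Aa|Aa] := pselect (A a).
  by rewrite (mem_set Aa).
by rewrite (memNset Aa); split=> // /eqP; rewrite eq_sym oner_eq0.
Qed.

Section invariant_sets.
Context {d1 d2 : measure_display} {Q : measurableType d1} {D : measurableType d2}.

Lemma sub_sigma_setT {A : set (set Q)} : sub_sigma A -> A setT.
Proof. by move=> [[A0 Acompl _] _]; rewrite -(setD0 setT); exact: Acompl A0. Qed.

Lemma sub_sigma_invariant (r : Q -> Q -> Prop) :
  sub_sigma (measurable `&` invariant r).
Proof.
split; last by move=> S [].
have [r0 rC rU] := sigma_algebra_invariant r.
split.
- by split; [exact: measurable0 | exact: r0].
- by move=> S [mS rS]; split; [exact: measurableD | exact: rC].
- move=> F mrF; split; last by apply: rU => n; exact: (mrF n).2.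
  by apply: bigcupT_measurable => n; exact: (mrF n).1.
Qed.

Definition indistinguishable (b b' : D) : Prop :=
  forall B, measurable B -> (B b <-> B b').

Lemma prod_sigma_invariant {r : Q -> Q -> Prop} {A : set (set Q)} :
  A `<=` invariant r ->
  prod_sigma (D:=D) A `<=` invariant (fun p p' => r p.1 p'.1 /\ indistinguishable p.2 p'.2).
Proof.
move=> rA; apply: smallest_sub; first exact: sigma_algebra_invariant.
move=> _ [A1 [B [A1A [mB ->]]]] [a b] [a' b'] /= [raa' bb'].
have := rA _ A1A a a' raa'; have := bb' B mB; rewrite /setX /=; tauto.
Qed.

Lemma prod_sigma_setX {A : set (set Q)} {A1} {B : set D} :
  A A1 -> measurable B -> prod_sigma A (A1 `*` B).
Proof. by move=> A1A mB; apply: sub_gen_smallest; exists A1, B. Qed.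

Lemma prod_sigma_sub_measurable {A : set (set Q)} :
  A `<=` measurable -> prod_sigma (D:=D) A `<=` measurable.
Proof.
move=> mA; apply: smallest_sub; first exact: sigma_algebra_measurable.
by move=> _ [A1 [B [A1A [mB ->]]]]; apply: measurableX => //; exact: mA.
Qed.

Lemma meas_seq_cons (B : set D) Bs :
  measurable B -> meas_seq Bs -> meas_seq (B :: Bs).
Proof. by move=> mB mBs [|i] //= /mBs. Qed.

Lemma meas_seq_head {B : set D} {Bs} : meas_seq (B :: Bs) -> measurable B.
Proof. by move/(_ 0%N (ltn0Sn _)). Qed.

Lemma meas_seq_behead {B : set D} {Bs} : meas_seq (B :: Bs) -> meas_seq Bs.
Proof. by move=> mBs i ?; exact: (mBs i.+1). Qed.

Lemma rect_nil : rect [::] = @setT (nat -> D).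
Proof. by apply/seteqP; split=> // w _ []. Qed.

Lemma rect_cons (B : set D) Bs w :
  rect (B :: Bs) w <-> B (w 0%N) /\ rect Bs (fun i => w i.+1).
Proof.
split=> [wBBs|[wB wBs] [|i] //= /wBs//].
by split=> [|i ?]; [exact: (wBBs 0%N) | exact: (wBBs i.+1)].
Qed.

Lemma rect_nth_coord k (B : set D) w : rect (nseq k setT ++ [:: B]) w <-> B (w k).
Proof.
elim: k w => [|k IH] w /=; first by rewrite rect_cons; split=> [[]|].
by rewrite rect_cons IH; split=> [[]|].
Qed.

Lemma meas_seq_nth_coord k (B : set D) :
  measurable B -> meas_seq (nseq k setT ++ [:: B]).
Proof.
move=> mB; elim: k => [|k IH]; last exact: meas_seq_cons.
by apply: meas_seq_cons => // -[].
Qed.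

Lemma rect_equiv_iff (w w' : nat -> D) :
  (forall Bs, meas_seq Bs -> (rect Bs w <-> rect Bs w')) <->
  (forall k, indistinguishable (w k) (w' k)).
Proof.
split=> [ww' k B mB | ww' Bs mBs].
  rewrite -!(rect_nth_coord k); exact/ww'/meas_seq_nth_coord.
by split=> wBs i iBs; apply/(ww' i _ (mBs i iBs)); exact: wBs.
Qed.

End invariant_sets.

Section deterministic_generator.
Context {d1 d2 : measure_display} {Q : measurableType d1} {D : measurableType d2}
  {R : realType} {f : Q -> Q} {g : Q -> D}
  (mf : measurable_fun setT f) (mg : measurable_fun setT g).

Let T := detT R mf mg.

Lemma detTE x C : T x C = (\1_C (f x, g (f x)))%:E.
Proof. by rewrite /T /detT /kdirac /= diracE indicE. Qed.

Lemma eq_detT_iff x x' C :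
  T x C = T x' C <-> (C (f x, g (f x)) <-> C (f x', g (f x'))).
Proof.
rewrite !detTE; split=> [CC' | CC'].
  by apply/indic_eq_iff; exact: EFin_inj CC'.
by congr EFin; exact/indic_eq_iff.
Qed.

Lemma detT_preimage1 C : (fun x => T x C) @^-1` [set 1] = [set x | C (f x, g (f x))].
Proof.
apply/seteqP; split=> x /=; rewrite detTE => Cx.
  exact/indic_eq1/(@EFin_inj R)/Cx.
by congr EFin; exact/indic_eq1.
Qed.

Definition output (x : Q) : nat -> D := fun i => g (iter i.+1 f x).

Lemma output_shift x k : output (f x) k = output x k.+1.
Proof. by rewrite /output -iterSr. Qed.

Lemma output_rect_cons B Bs :
  output @^-1` rect (B :: Bs) = (g \o f) @^-1` B `&` f @^-1` (output @^-1` rect Bs).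
Proof.
have outputS x : output (f x) = (fun i => output x i.+1) by apply/funext => i; exact: output_shift.
by apply/seteqP; split=> x /=; rewrite outputS => /rect_cons.
Qed.

Lemma measurable_output_rect Bs : meas_seq Bs -> measurable (output @^-1` rect Bs).
Proof.
elim: Bs => [|B Bs IH] mBs; first by rewrite rect_nil preimage_setT.
rewrite output_rect_cons; apply: measurableI.
  rewrite -[X in measurable X]setTI; apply: (measurableT_comp mg mf) => //.
  exact: meas_seq_head mBs.
rewrite -[X in measurable X]setTI; apply: mf => //.
by apply IH; exact: meas_seq_behead mBs.
Qed.

Lemma iterT_detT Bs x : meas_seq Bs -> iterT T Bs x = (\1_(output @^-1` rect Bs) x)%:E.
Proof.
elim: Bs x => [|B Bs IH] x mBs /=; first by rewrite rect_nil preimage_setT indicT.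
have mBs' := meas_seq_behead mBs.
rewrite (eq_integral (fun z => (\1_(output @^-1` rect Bs) z.1)%:E)); last first.
  by move=> z _; rewrite IH.
rewrite integral_dirac; last 2 first.
- by apply: measurableX => //; exact: meas_seq_head mBs.
- apply/measurable_EFinP/measurable_funTS/measurableT_comp => //.
  exact/measurable_indic/measurable_output_rect.
rewrite diracE -EFinM output_rect_cons indicI; congr EFin.
by rewrite indicE in_setX in_setT.
Qed.

Lemma marginal_detT_dirac x Bs : meas_seq Bs ->
  marginal T (dirac x) Bs = (\1_(rect Bs) (output x))%:E.
Proof.
move=> mBs; rewrite /marginal.
rewrite (eq_integral (fun z => (\1_(output @^-1` rect Bs) z)%:E)); last first.
  by move=> z _; rewrite iterT_detT.
rewrite integral_dirac ?diracT ?mul1e //.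
exact/measurable_EFinP/measurable_indic/measurable_output_rect.
Qed.

Lemma is_GT_detT_dirac x : is_GT T (dirac x) (dirac (output x : @seqSpace _ D)).
Proof. by move=> Bs mBs; rewrite marginal_detT_dirac // diracE indicE. Qed.

Lemma common_is_GT_detT_dirac_iff x1 x2 :
  (exists P, is_GT T (dirac x1) P /\ is_GT T (dirac x2) P) <->
  (forall k, indistinguishable (output x1 k) (output x2 k)).
Proof.
apply: iff_trans (rect_equiv_iff _ _); split.
  move=> [P [Px1 Px2]] Bs mBs; apply/indic_eq_iff/(@EFin_inj R).
  by rewrite -!marginal_detT_dirac // -Px1 // -Px2.
move=> sep; exists (dirac (output x1 : @seqSpace _ D)).
split=> [|Bs mBs]; first exact: is_GT_detT_dirac.
rewrite (is_GT_detT_dirac x1 _ mBs) !marginal_detT_dirac //; congr EFin.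
exact/indic_eq_iff/sep.
Qed.

Definition same_output (y y' : Q) : Prop :=
  forall k, indistinguishable (output y k) (output y' k).

Lemma same_output_shift y y' : same_output y y' -> same_output (f y) (f y').
Proof. by move=> yy' k; rewrite !output_shift; exact: yy'. Qed.

Lemma detT_invariant {A : set (set Q)} {C} :
  A `<=` invariant same_output -> prod_sigma A C ->
  forall y y', same_output y y' -> T y C = T y' C.
Proof.
move=> AS prodC y y' yy'; apply/eq_detT_iff.
apply: (prod_sigma_invariant AS _ prodC (f y, g (f y)) (f y', g (f y'))).
by split; [exact: same_output_shift | exact: yy' 0%N].
Qed.

Lemma sigmaQ_sub_invariant :
  sigmaQ (fun x A => T x A) `<=` measurable `&` invariant same_output.
Proof.
move=> S; apply; first exact: sub_sigma_invariant.
have Smeas : measurable `&` invariant same_output `<=` measurable by move=> ? [].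
have Sinv : measurable `&` invariant same_output `<=` invariant same_output.
  by move=> ? [].
move=> C prodC B mB; split.
  have mC := prod_sigma_sub_measurable Smeas _ prodC.
  by rewrite -[X in measurable X]setTI; exact: measurable_kernel.
by move=> y y' yy' /=; rewrite (detT_invariant Sinv prodC _ _ yy').
Qed.

Lemma sigmaQ_output k B :
  measurable B -> sigmaQ (fun x A => T x A) [set x | B (output x k)].
Proof.
move=> + A sA kA; have AT := sub_sigma_setT sA.
have Apre C : prod_sigma A C -> A [set x | C (f x, g (f x))].
  by move=> prodC; rewrite -detT_preimage1; exact: kA _ prodC _ (emeasurable_set1 1).
elim: k B => [|k IH] B mB.
  suff -> : [set x | B (output x 0)] = [set x | (setT `*` B) (f x, g (f x))].
    exact: Apre (prod_sigma_setX AT mB).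
  by apply/seteqP; split=> [x Bx | x [_ Bx]].
suff -> : [set x | B (output x k.+1)] =
          [set x | ([set y | B (output y k)] `*` setT) (f x, g (f x))].
  exact: Apre (prod_sigma_setX (IH B mB) measurableT).
by apply/seteqP; split=> [x | x []] /=; rewrite output_shift.
Qed.

Lemma eq_detT_on_prod_sigmaQ_iff x1 x2 :
  (forall C, prod_sigma (sigmaQ (fun x A => T x A)) C -> T x1 C = T x2 C) <->
  same_output x1 x2.
Proof.
split=> [TT [|k] B mB | same C CS].
- have sQT : sigmaQ (fun x A => T x A) setT by move=> A sA _; exact: sub_sigma_setT.
  have CS := prod_sigma_setX sQT mB.
  by have /eq_detT_iff := TT _ CS; rewrite /setX /=; tauto.
- have CS := prod_sigma_setX (sigmaQ_output k B mB) (@measurableT _ D).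
  by have /eq_detT_iff := TT _ CS; rewrite /setX /= !output_shift; tauto.
- exact: detT_invariant (fun S h => (sigmaQ_sub_invariant S h).2) CS _ _ same.
Qed.

End deterministic_generator.

Theorem corollary4p7 (d1 d2 : measure_display) (Q : measurableType d1)
  (D : measurableType d2) (R : realType) (f : Q -> Q) (g : Q -> D)
  (mf : measurable_fun setT f) (mg : measurable_fun setT g) (x1 x2 : Q) :
  let T := detT R mf mg in
  (exists P : probability (@seqSpace _ D) R,
      is_GT T (@dirac _ Q x1 R) P /\ is_GT T (@dirac _ Q x2 R) P)
  <->
  (forall C, prod_sigma (sigmaQ (fun x A => T x A)) C -> T x1 C = T x2 C).
Proof.
move=> T; apply: iff_trans (common_is_GT_detT_dirac_iff mf mg x1 x2) _.
exact: iff_sym (eq_detT_on_prod_sigmaQ_iff mf mg x1 x2).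
Qed.
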